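(* If $1\le m\le 4$, then for every Latin square $K$ on $[m]$ the matroid $M[K]$ is realizable over $\mathbb{R}$.
   Context: A Latin square $K=(k_{i,j})$ on $[m]$ is an $m\times m$ matrix with entries in $[m]$ in which each symbol occurs exactly once in each row and each column. Let $\mathcal{C}[K]=\{\{i,m+j,2m+k_{i,j}\}:1\le i,j\le m\}$, a family of $3$-subsets of $[3m]$. $M[K]$ is the simple matroid on $[3m]$ whose family of all $3$-element circuits is exactly $\mathcal{C}[K]$ and which has rank $3$ when $m\ge 2$ (for $m=1$ it is the rank-$2$ uniform matroid on $\{1,2,3\}$). A matroid is realizable over $\mathbb{R}$ if it is the underlying matroid of an arrangement of hyperplanes over $\mathbb{R}$ (equivalently, the linear matroid of a finite family of vectors in a real vector space). *)

From HB Require Import structures.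
From mathcomp Require Import all_boot all_order all_algebra.
From mathcomp Require Import Rstruct.
From Stdlib Require Import Reals.
Set Implicit Arguments. Unset Strict Implicit. Unset Printing Implicit Defensive.
Import Order.TTheory GRing.Theory Num.Theory.

(* Indices are 0-based: [m] = 'I_m, [3m] = 'I_(3*m). *)

Definition latin_square (m : nat) (K : 'I_m -> 'I_m -> 'I_m) : Prop :=
  (forall i : 'I_m, injective (K i)) /\ (forall j : 'I_m, injective (fun i => K i j)).

Lemma blk_proof (m : nat) (b : 'I_3) (i : 'I_m) : b * m + i < 3 * m.
Proof.
case: b => b hb /=; case: i => i hi /=.
have h1 : b * m + i < b * m + m by rewrite ltn_add2l.
apply: (leq_trans h1). by rewrite -mulSnr leq_mul2r hb orbT.
Qed.

(* blk b i = element b*m + i of [3m] (0-based version of i, m+j, 2m+k). *)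
Definition blk (m : nat) (b : 'I_3) (i : 'I_m) : 'I_(3 * m) :=
  Ordinal (blk_proof b i).

Definition CK (m : nat) (K : 'I_m -> 'I_m -> 'I_m) : {set {set 'I_(3 * m)}} :=
  [set [set blk (@Ordinal 3 0 isT) i; blk (@Ordinal 3 1 isT) j; blk (@Ordinal 3 2 isT) (K i j)]
     | i : 'I_m, j : 'I_m].

(* Independent sets of M[K]: a simple matroid (all sets of size <= 2 are
   independent) whose 3-element circuits are exactly C[K] (so the other
   3-sets are independent) and of rank 3 (no independent set of size >= 4).
   For m = 1, C[K] consists of the whole ground set and this gives the
   rank-2 uniform matroid on 3 elements, as stipulated. *)
Definition MK_indep (m : nat) (K : 'I_m -> 'I_m -> 'I_m) (S : {set 'I_(3 * m)}) : bool :=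
  (#|S| <= 2) || ((#|S| == 3) && (S \notin CK K)).

Definition vec_indep (T : finType) (n : nat) (v : T -> 'rV[R]_n) (S : {set T}) : bool :=
  row_free (\matrix_(k < #|S|) v (enum_val k)).

Definition realizable_over_R (T : finType) (indep : {set T} -> bool) : Prop :=
  exists (n : nat) (v : T -> 'rV[R]_n), forall S : {set T}, indep S = vec_indep v S.

(* Relabelling the rows, columns and symbols of a Latin square permutes each
   block of [3m] and carries C[K] onto C[L] for the relabelled square L, so
   realizability of M[K] is invariant under isotopy and K may be assumed
   reduced (first row and first column the identity).  The reduced squares of
   order at most 4 are enumerated exhaustively (there are 1, 1, 1 and 4), and
   for each one integer vectors in R^3 are checked by computation to be
   pairwise independent with dependent triples exactly C[K].  As at most three
   vectors of R^3 are independent, such vectors realize M[K].  They are points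
   of plane cubics (for the table of Z/2 x Z/2, of y^2 = x^3 - 25x), on which
   three points are collinear exactly when they sum to zero in the group law. *)

From Stdlib Require Import Reals.
From HB Require Import structures.
From mathcomp Require Import all_boot all_order all_algebra.
From mathcomp Require Import Rstruct ring ssrZ.
Set Implicit Arguments. Unset Strict Implicit. Unset Printing Implicit Defensive.
Import Order.TTheory GRing.Theory Num.Theory.

Lemma eqmx_rows_sum (F : fieldType) p n (f : 'I_p -> 'rV[F]_n) :
  ((\matrix_(k < p) f k)%R :=: \sum_(k < p) <<f k>>)%MS.
Proof.
apply/eqmxP/andP; split.
  by apply/row_subP => k; rewrite rowK (sumsmx_sup k) ?genmxE.
by apply/sumsmx_subP => k _; rewrite genmxE (eq_row_sub k) ?rowK.
Qed.

Section VectorRank.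
Variables (F : fieldType) (T : finType) (n : nat) (v : T -> 'rV[F]_n).

Definition vrank (S : {set T}) : nat := \rank (\sum_(x in S) <<v x>>)%MS.

Lemma vrank_leq_card S : vrank S <= #|S|.
Proof.
rewrite /vrank -sum1_card.
elim/big_ind2: _ => [|A1 k1 A2 k2 le1 le2|x _]; first by rewrite mxrank0.
  exact: leq_trans (mxrank_adds_leqif _ _) (leq_add le1 le2).
by rewrite genmxE rank_leq_row.
Qed.

Lemma vrank_leq_dim S : vrank S <= n.
Proof. exact: rank_leq_col. Qed.

Lemma vrank0 : vrank set0 = 0.
Proof. by rewrite /vrank big_set0 mxrank0. Qed.

Lemma vrank1 a : v a != 0%R -> vrank [set a] = 1.
Proof.
move=> va_neq0; rewrite /vrank big_set1 genmxE.
by apply/eqP; rewrite eqn_leq rank_leq_row lt0n mxrank_eq0.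
Qed.

End VectorRank.

Lemma vrank_imset (F : fieldType) (T T' : finType) n (v : T -> 'rV[F]_n) (p : T' -> T)
    (S : {set T'}) :
  injective p -> vrank v (p @: S) = vrank (v \o p) S.
Proof. by move=> p_inj; rewrite /vrank big_imset //; apply: in2W. Qed.

Lemma vec_indep_vrank (T : finType) n (v : T -> 'rV[R]_n) S :
  vec_indep v S = (vrank v S == #|S|).
Proof.
by rewrite /vec_indep /row_free eqmx_rows_sum /vrank (big_enum_val (fun x => <<v x>>%MS)).
Qed.

Lemma cards3_set3 (T : finType) (A : {set T}) : #|A| = 3 ->
  exists a b c, [/\ a != b, a != c, b != c & A = [set a; b; c]].
Proof.
move=> A3; have [a aA] : exists a, a \in A by apply/card_gt0P; rewrite A3.
have /cards2P [b [c [bc Aa]]] : #|A :\ a| == 2.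
  by move: A3; rewrite (cardsD1 a) aA add1n => -[->].
have : (b \in A :\ a) && (c \in A :\ a) by rewrite Aa !inE !eqxx orbT.
rewrite !inE => /andP [/andP [ba _] /andP [ca _]].
by exists a, b, c; rewrite eq_sym ba eq_sym ca bc -setUA -Aa setD1K.
Qed.

Definition realizes3 (T : finType) (C : {set {set T}}) (v : T -> 'rV[R]_3) : Prop :=
  [/\ forall a, v a != 0%R,
      forall a b, a != b -> vrank v [set a; b] = 2 &
      forall a b c, a != b -> a != c -> b != c ->
        ([set a; b; c] \in C) = (vrank v [set a; b; c] < 3)].

Lemma realizes3_indep (T : finType) (C : {set {set T}}) v : realizes3 C v ->
  forall S : {set T}, (#|S| <= 2) || ((#|S| == 3) && (S \notin C)) = vec_indep v S.
Proof.
move=> [v_neq0 v_pair v_triple] S; rewrite vec_indep_vrank.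
have le_dim := vrank_leq_dim v S; have le_card := vrank_leq_card v S.
case: (ltngtP #|S| 3) => [S_lt3|S_gt3|S_eq3].
- rewrite -ltnS S_lt3; move: S_lt3; rewrite ltnS leq_eqVlt ltnS leq_eqVlt ltnS leqn0.
  case/or3P => [/cards2P [a [b [ab ->]]]|/cards1P [a ->]|/eqP/cards0_eq ->].
  + by rewrite v_pair // cards2 ab.
  + by rewrite vrank1 // cards1.
  + by rewrite vrank0 cards0.
- rewrite leqNgt (ltn_trans _ S_gt3) //=; apply/esym/negbTE.
  by rewrite neq_ltn (leq_ltn_trans le_dim S_gt3).
- have [a [b [c [ab ac bc S_abc]]]] := cards3_set3 S_eq3.
  by rewrite S_eq3 /= S_abc v_triple // -S_abc ltn_neqAle le_dim andbT negbK.
Qed.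

Section ThreeRows.
Local Open Scope ring_scope.

Definition vec3 (F : nzRingType) (x y z : F) : 'rV[F]_3 := \row_k [:: x; y; z]`_k.
Definition rows3 (F : nzRingType) (u v w : 'rV[F]_3) : 'M[F]_3 :=
  \matrix_(k < 3) [:: u; v; w]`_k.

Lemma det_rows3_vec3 (F : comNzRingType) (u0 u1 u2 v0 v1 v2 w0 w1 w2 : F) :
  \det (rows3 (vec3 u0 u1 u2) (vec3 v0 v1 v2) (vec3 w0 w1 w2)) =
  u0 * (v1 * w2 - v2 * w1) - u1 * (v0 * w2 - v2 * w0) + u2 * (v0 * w1 - v1 * w0).
Proof.
rewrite (expand_det_row _ 0) !big_ord_recl big_ord0 /cofactor.
rewrite !(expand_det_row _ 0) !big_ord_recl !big_ord0 /cofactor !det_mx11 !mxE.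
by rewrite /bump /=; ring.
Qed.

Lemma rows3_eqmx (F : fieldType) (u v w : 'rV[F]_3) :
  (rows3 u v w :=: <<u>> + (<<v>> + <<w>>))%MS.
Proof.
apply: eqmx_trans (eqmx_rows_sum (fun k : 'I_3 => [:: u; v; w]`_k)) _.
by rewrite !big_ord_recl big_ord0 addsmx0_id; apply: eqmx_refl.
Qed.

Lemma row_free_rows3 (F : fieldType) (u v w : 'rV[F]_3) :
  row_free (rows3 u v w) = (\det (rows3 u v w) != 0).
Proof. by rewrite row_free_unit unitmxE unitfE. Qed.

Variables (F : fieldType) (T : finType) (v : T -> 'rV[F]_3).

Lemma vrank_set3 a b c : a != b -> a != c -> b != c ->
  vrank v [set a; b; c] = \rank (rows3 (v a) (v b) (v c)).
Proof.
move=> ab ac bc; rewrite rows3_eqmx /vrank -setUA big_setU1 /=; last first.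
  by rewrite !inE negb_or ab ac.
by rewrite big_setU1 ?inE // big_set1.
Qed.

Lemma vrank2_of_det a b t : a != b -> \det (rows3 (v a) (v b) t) != 0 ->
  vrank v [set a; b] = 2%N.
Proof.
move=> ab; rewrite -row_free_rows3 /row_free rows3_eqmx addsmxA => /eqP rank3.
apply/eqP; rewrite eqn_leq (leq_trans (vrank_leq_card _ _)) ?cards2 ?ab //=.
suff: (3 <= vrank v [set a; b] + 1)%N by rewrite addn1.
rewrite -[X in (X <= _)%N]rank3 /vrank big_setU1 ?inE // big_set1.
by rewrite (leq_trans (mxrank_adds_leqif _ _)) // leq_add2l genmxE rank_leq_row.
Qed.

End ThreeRows.

Lemma realizes3_comp (T T' : finType) (C : {set {set T}}) (C' : {set {set T'}})
    (p : T -> T') (w : T' -> 'rV[R]_3) :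
  injective p -> (forall S, (S \in C) = (p @: S \in C')) ->
  realizes3 C' w -> realizes3 C (w \o p).
Proof.
move=> p_inj C_C' [w_neq0 w_pair w_triple]; split => [a|a b ab|a b c ab ac bc].
- exact: w_neq0.
- by rewrite -vrank_imset // !imsetU !imset_set1 w_pair ?(inj_eq p_inj).
- by rewrite C_C' -vrank_imset // !imsetU !imset_set1 w_triple ?(inj_eq p_inj).
Qed.

Local Notation rows_block := (@Ordinal 3 0 isT).
Local Notation cols_block := (@Ordinal 3 1 isT).
Local Notation syms_block := (@Ordinal 3 2 isT).

Lemma CKP m (K : 'I_m -> 'I_m -> 'I_m) S :
  reflect (exists i j, S = [set blk rows_block i; blk cols_block j; blk syms_block (K i j)])
          (S \in CK K).
Proof.
apply: (iffP imset2P) => [[i j _ _ ->]|[i [j ->]]]; first by exists i, j.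
by exists i j.
Qed.

Section Blocks.
Variable m : nat.
Implicit Types (b : 'I_3) (i : 'I_m) (x : 'I_(3 * m)).

Lemma ord3m_gt0 x : 0 < m.
Proof. by case: m x => [|m'] [x lt_x] //; rewrite muln0 in lt_x. Qed.

Lemma block_subproof x : x %/ m < 3.
Proof. by rewrite ltn_divLR ?(ord3m_gt0 x) // ltn_ord. Qed.

Definition block x : 'I_3 := Ordinal (block_subproof x).
Definition offset x : 'I_m := Ordinal (ltn_pmod x (ord3m_gt0 x)).

Lemma blk_block_offset x : blk (block x) (offset x) = x.
Proof. by apply: val_inj; rewrite /= -divn_eq. Qed.

Lemma block_blk b i : block (blk b i) = b.
Proof.
by apply: val_inj; rewrite /= divnMDl ?(ord3m_gt0 (blk b i)) // divn_small ?addn0.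
Qed.

Lemma offset_blk b i : offset (blk b i) = i.
Proof. by apply: val_inj; rewrite /= modnMDl modn_small. Qed.

Variables (r c s : 'I_m -> 'I_m).

Definition relabel b : 'I_m -> 'I_m := match val b with 0 => r | 1 => c | _ => s end.

Definition isotopy_map x : 'I_(3 * m) := blk (block x) (relabel (block x) (offset x)).

Lemma isotopy_map_blk b i : isotopy_map (blk b i) = blk b (relabel b i).
Proof. by rewrite /isotopy_map block_blk offset_blk. Qed.

Hypotheses (r_inj : injective r) (c_inj : injective c) (s_inj : injective s).

Lemma isotopy_map_inj : injective isotopy_map.
Proof.
have relabel_inj b : injective (relabel b) by case: b => [[|[|[|]]] ?].
move=> x y e; have := congr1 offset e; have := congr1 block e.
rewrite /isotopy_map !block_blk !offset_blk => e_block.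
rewrite e_block => /relabel_inj e_offset.
by rewrite -[x]blk_block_offset -[y]blk_block_offset e_block e_offset.
Qed.

Lemma CK_isotopy (K L : 'I_m -> 'I_m -> 'I_m) :
  (forall i j, L (r i) (c j) = s (K i j)) ->
  forall S, (S \in CK K) = (isotopy_map @: S \in CK L).
Proof.
move=> LK S.
have image_triple i j :
    isotopy_map @: [set blk rows_block i; blk cols_block j; blk syms_block (K i j)] =
    [set blk rows_block (r i); blk cols_block (c j); blk syms_block (L (r i) (c j))].
  by rewrite !imsetU !imset_set1 !isotopy_map_blk LK.
apply/CKP/CKP => [[i [j ->]]|[i' [j' e]]]; first by exists (r i), (c j).
have [r' rK r'K] := injF_bij r_inj; have [c' cK c'K] := injF_bij c_inj.
exists (r' i'), (c' j'); apply: (imset_inj isotopy_map_inj).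
by rewrite e image_triple r'K c'K.
Qed.

End Blocks.

Lemma realizes3_isotopy m (K L : 'I_m -> 'I_m -> 'I_m) (r c s : 'I_m -> 'I_m) w :
  injective r -> injective c -> injective s ->
  (forall i j, L (r i) (c j) = s (K i j)) ->
  realizes3 (CK L) w -> realizes3 (CK K) (w \o isotopy_map r c s).
Proof.
move=> r_inj c_inj s_inj LK; apply: realizes3_comp; first exact: isotopy_map_inj.
exact: CK_isotopy.
Qed.

Definition reduced m (L : 'I_m.+1 -> 'I_m.+1 -> 'I_m.+1) : Prop :=
  (forall j, L ord0 j = j) /\ (forall i, L i ord0 = i).

Lemma latin_isotope_reduced m (K : 'I_m.+1 -> 'I_m.+1 -> 'I_m.+1) : latin_square K ->
  exists L r s, [/\ latin_square L, reduced L, injective r, injective s &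
                    forall i j, L (r i) j = s (K i j)].
Proof.
case=> K_row K_col.
pose s := invF (K_row ord0); have sK j : s (K ord0 j) = j := invF_f (K_row ord0) j.
have s_inj : injective s := can_inj (f_invF (K_row ord0)).
pose r i := s (K i ord0); have r_inj : injective r by move=> i i' /s_inj /K_col.
pose r' := invF r_inj; have r'K i : r' (r i) = i := invF_f r_inj i.
have rK' i : r (r' i) = i := f_invF r_inj i.
exists (fun i j => s (K (r' i) j)), r, s; split => //.
- by split=> [i j j' /s_inj /K_row|j i i' /s_inj /K_col /(can_inj rK')].
- split=> [j|i]; last exact: rK'.
  by rewrite -[ord0 in r' ord0](sK ord0) r'K sK.
- by move=> i j; rewrite r'K.
Qed.

Fixpoint choices (T : Type) (Ps : seq (seq T)) : seq (seq T) :=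
  if Ps is P :: Ps' then [seq x :: xs | x <- P, xs <- choices Ps'] else [:: [::]].

Lemma map_in_choices (I T : eqType) (f : I -> T) (P : I -> seq T) (idx : seq I) :
  (forall i, i \in idx -> f i \in P i) -> map f idx \in choices (map P idx).
Proof.
elim: idx => [|i idx IH] //= fP; apply/allpairsP; exists (f i, map f idx).
by rewrite fP ?mem_head ?IH // => j j_idx; rewrite fP // inE j_idx orbT.
Qed.

Definition reduced_row_candidates m i : seq (seq nat) :=
  if i == 0 then [:: iota 0 m] else [seq t <- permutations (iota 0 m) | head 0 t == i].

Definition reduced_tables m : seq (seq (seq nat)) :=
  [seq t <- choices (map (reduced_row_candidates m) (iota 0 m)) |
     all (fun j => uniq [seq nth 0 row j | row <- t]) (iota 0 m)].

Definition table_of m (L : 'I_m -> 'I_m -> 'I_m) : seq (seq nat) :=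
  [seq [seq val (L i j) | j <- enum 'I_m] | i <- enum 'I_m].

(* [enum 'I_n] and [inord] go through [insub], which is stuck under [vm_compute];
   [ords n] is a computable copy of [enum 'I_n]. *)
Fixpoint ords n : seq 'I_n :=
  if n is n'.+1 then ord0 :: map (lift ord0) (ords n') else [::].

Lemma ords_enum n : ords n = enum 'I_n.
Proof.
apply: (inj_map val_inj); rewrite val_enum_ord.
elim: n => //= n IH; congr (_ :: _).
by rewrite -map_comp (eq_map (g := addn 1 \o val)) // map_comp IH -iotaDl.
Qed.

Definition square_of_table m (t : seq (seq nat)) : 'I_m.+1 -> 'I_m.+1 -> 'I_m.+1 :=
  fun i j => nth ord0 (ords m.+1) (nth 0 (nth [::] t i) j).

Lemma nth_table_of m (L : 'I_m -> 'I_m -> 'I_m) (i j : 'I_m) :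
  nth 0 (nth [::] (table_of L) i) j = L i j.
Proof.
by rewrite (nth_map i) ?size_enum_ord // (nth_map j) ?size_enum_ord // !nth_ord_enum.
Qed.

Lemma table_ofK m (L : 'I_m.+1 -> 'I_m.+1 -> 'I_m.+1) i j :
  square_of_table (table_of L) i j = L i j.
Proof. by rewrite /square_of_table nth_table_of ords_enum nth_ord_enum. Qed.

Lemma table_of_reduced m (L : 'I_m.+1 -> 'I_m.+1 -> 'I_m.+1) :
  latin_square L -> reduced L -> table_of L \in reduced_tables m.+1.
Proof.
move=> [L_row L_col] [L_0j L_i0]; rewrite mem_filter; apply/andP; split.
  apply/allP => j; rewrite mem_iota => /= j_lt.
  have -> : [seq nth 0 row j | row <- table_of L] =
            [seq val (L i (Ordinal j_lt)) | i <- enum 'I_m.+1].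
    rewrite -map_comp; apply: eq_map => i /=; rewrite (nth_map (Ordinal j_lt)) ?size_enum_ord //.
    by rewrite -[j]/(val (Ordinal j_lt)) nth_ord_enum.
  by rewrite map_inj_uniq ?enum_uniq // => i i' /val_inj /L_col.
rewrite -val_enum_ord -map_comp; apply: map_in_choices => i _.
rewrite [(_ \o _) _]/= /reduced_row_candidates; have [i0|i_neq0] := eqVneq (val i) 0.
  have -> : i = ord0 by apply: val_inj.
  by rewrite inE (eq_map (fun j => congr1 val (L_0j j))) val_enum_ord.
have row_perm : perm_eq [seq L i j | j <- enum 'I_m.+1] (enum 'I_m.+1).
  apply: uniq_perm; rewrite ?map_inj_uniq -?enumT ?enum_uniq // => j.
  by rewrite mem_enum; apply/mapP; exists (invF (L_row i) j); rewrite ?mem_enum ?f_invF.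
rewrite mem_filter mem_permutations -val_enum_ord (map_comp val) (perm_map val row_perm).
by rewrite enum_ordSl /= L_i0 andbT.
Qed.

Section IntegerVectors.
Local Open Scope ring_scope.

Definition zR (z : Z) : R := (int_of_Z z)%:~R.

Definition zvec (p : Z * Z * Z) : 'rV[R]_3 :=
  let: (x, y, z) := p in vec3 (zR x) (zR y) (zR z).

Definition det3Z (p q r : Z * Z * Z) : Z :=
  let: (u0, u1, u2) := p in let: (v0, v1, v2) := q in let: (w0, w1, w2) := r in
  u0 * (v1 * w2 - v2 * w1) - u1 * (v0 * w2 - v2 * w0) + u2 * (v0 * w1 - v1 * w0).

Lemma det_zvec p q r : \det (rows3 (zvec p) (zvec q) (zvec r)) = zR (det3Z p q r).
Proof.
case: p q r => [[u0 u1] u2] [[v0 v1] v2] [[w0 w1] w2].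
by rewrite det_rows3_vec3 /zR !(rmorphB, rmorphD, rmorphM).
Qed.

Lemma zR_eq0 z : (zR z == 0) = (z == 0).
Proof. by rewrite intr_eq0 -(can_eq int_of_ZK) rmorph0. Qed.

Lemma zvec_neq0 p : p != (0, 0, 0) -> zvec p != 0.
Proof.
case: p => [[x y] z]; apply: contraNneq => /rowP zvec0.
have coord0 (k : 'I_3) : [:: zR x; zR y; zR z]`_k == 0.
  by have := zvec0 k; rewrite !mxE => ->.
have := coord0 0; have := coord0 1; have := coord0 2.
by rewrite /= !zR_eq0 => /eqP-> /eqP-> /eqP->.
Qed.

End IntegerVectors.

Definition CK_triple m (K : 'I_m -> 'I_m -> 'I_m) (a b c : 'I_(3 * m)) : bool :=
  has (fun i => has (fun j =>
    perm_eq [:: a; b; c] [:: blk rows_block i; blk cols_block j; blk syms_block (K i j)])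
    (ords m)) (ords m).

Lemma CK_tripleE m (K : 'I_m -> 'I_m -> 'I_m) a b c : a != b -> a != c -> b != c ->
  ([set a; b; c] \in CK K) = CK_triple K a b c.
Proof.
have set3_seq (x y z : 'I_(3 * m)) : [set x; y; z] =i [:: x; y; z].
  by move=> t; rewrite !inE orbA.
have blk_neq (b1 b2 : 'I_3) (i1 i2 : 'I_m) : b1 != b2 -> blk b1 i1 != blk b2 i2.
  by apply: contraNneq => /(congr1 (@block m)); rewrite !block_blk => ->.
move=> ab ac bc; rewrite /CK_triple ords_enum.
apply/CKP/hasP => [[i [j e]]|[i _ /hasP [j _ abc_perm]]].
  exists i; rewrite ?mem_enum //; apply/hasP; exists j; rewrite ?mem_enum //.
  apply: uniq_perm => [||t].
  - by rewrite /= !inE negb_or ab ac bc.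
  - by rewrite /= !inE negb_or !blk_neq.
  - by rewrite -!set3_seq e.
by exists i, j; apply/setP => t; rewrite !set3_seq (perm_mem abc_perm).
Qed.

Definition certificate_ok m (K : 'I_m -> 'I_m -> 'I_m) (pts : seq (Z * Z * Z)) : bool :=
  let E := ords (3 * m) in let p (a : 'I_(3 * m)) := nth 0%R pts a in
  [&& all (fun a => p a != 0%R) E,
      all (fun a => all (fun b => (a != b) ==>
         has (fun t => det3Z (p a) (p b) t != 0%R) [:: (1, 0, 0); (0, 1, 0); (0, 0, 1)]%R) E) E &
      all (fun a => all (fun b => all (fun c => [&& a != b, a != c & b != c] ==>
         (CK_triple K a b c == (det3Z (p a) (p b) (p c) == 0%R))) E) E) E].

Lemma certificate_realizes3 m (K : 'I_m -> 'I_m -> 'I_m) pts : certificate_ok K pts ->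
  realizes3 (CK K) (fun a => zvec (nth 0%R pts a)).
Proof.
rewrite /certificate_ok ords_enum.
case/and3P => /allP pts_neq0 /allP pts_pair /allP pts_triple.
split=> [a|a b ab|a b c ab ac bc]; first by apply/zvec_neq0/pts_neq0; rewrite mem_enum.
  have /allP /(_ b) := pts_pair a (mem_enum _ a); rewrite mem_enum ab => /(_ isT) /hasP [t _].
  by move=> det_neq0; apply: (vrank2_of_det (t := zvec t)); rewrite // det_zvec zR_eq0.
rewrite CK_tripleE // vrank_set3 // ltnNge row_leq_rank row_free_rows3 det_zvec zR_eq0 negbK.
have /allP /(_ b (mem_enum _ b)) /allP /(_ c (mem_enum _ c)) := pts_triple a (mem_enum _ a).
by rewrite ab ac bc => /eqP.
Qed.

Definition certified m (certs : seq (seq (seq nat) * seq (Z * Z * Z))) : bool :=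
  all (mem (map fst certs)) (reduced_tables m.+1) &&
  all (fun c => certificate_ok (@square_of_table m c.1) c.2) certs.

Lemma certified_realizes3 m certs : certified m certs ->
  forall K : 'I_m.+1 -> 'I_m.+1 -> 'I_m.+1, latin_square K -> exists w, realizes3 (CK K) w.
Proof.
case/andP => /allP covered /allP certs_ok K.
case/latin_isotope_reduced => L [r [s [latL redL r_inj s_inj LK]]].
have /mapP [[t pts] t_cert /= tL] := covered _ (table_of_reduced latL redL).
exists ((fun a => zvec (nth 0%R pts a)) \o isotopy_map r id s).
have realizes_t := certificate_realizes3 (certs_ok _ t_cert).
apply: (realizes3_isotopy r_inj _ s_inj _ realizes_t) => // i j.
by rewrite /= -tL table_ofK LK.
Qed.

Section Certificates.
Local Open Scope Z_scope.

Definition certificates (n : nat) : seq (seq (seq nat) * seq (Z * Z * Z)) :=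
  match n with
  | 1%nat => [:: ([:: [:: 0]]%nat, [:: (1, 0, 0); (0, 1, 0); (1, 1, 0)])]
  | 2%nat => [:: ([:: [:: 0; 1]; [:: 1; 0]]%nat,
                  [:: (1, 0, 0); (0, 1, 0); (0, 0, 1); (1, 1, 1); (1, 0, 1); (0, 1, 1)])]
  | 3%nat => [:: ([:: [:: 0; 1; 2]; [:: 1; 2; 0]; [:: 2; 0; 1]]%nat,
                  [:: (-3, -3, 1); (1, -1, 1); (3, 9, 1); (6, -9, 1); (6, 3, 8); (-2, -8, 1);
                      (-15, -125, 27); (45, 3, 125); (45, -243, 1)])]
  | 4%nat =>
    [:: ([:: [:: 0; 1; 2; 3]; [:: 1; 0; 3; 2]; [:: 2; 3; 0; 1]; [:: 3; 2; 1; 0]]%nat,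
         [:: (-4, 6, 1); (50, 75, 8); (-15, -100, 27); (45, -300, 1); (20172, -62279, 1728);
             (-147600, -455700, 68921); (372155, 1205400, 29791); (-235445, 762600, 117649);
             (-5506727908, -39601568754, 11497268593);
             (198922613450, -1430549626725, 3811036328);
             (-608348042415, 845927888300, 147449000187);
             (669702585555, 931243391100, 110522894399)]);
        ([:: [:: 0; 1; 2; 3]; [:: 1; 0; 3; 2]; [:: 2; 3; 1; 0]; [:: 3; 2; 0; 1]]%nat,
         [:: (-2, 1, 2); (3, -9, 1); (-6, -9, 8); (3, 3, 2); (15, -100, 54); (-120, 27, 512);
             (72, 405, 2); (-180, -48, 125); (18722, -67081, 24334); (-59829, 25047, 117649);
             (-125097, -79233, 101306); (74382, 176157, 10648)]);
        ([:: [:: 0; 1; 2; 3]; [:: 1; 2; 3; 0]; [:: 2; 3; 0; 1]; [:: 3; 0; 1; 2]]%nat,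
         [:: (-2, 1, 2); (-6, -9, 8); (3, -9, 1); (3, 3, 2); (15, -100, 54); (72, 405, 2);
             (-120, 27, 512); (-180, -48, 125); (18722, -67081, 24334); (-125097, -79233, 101306);
             (-59829, 25047, 117649); (74382, 176157, 10648)]);
        ([:: [:: 0; 1; 2; 3]; [:: 1; 3; 0; 2]; [:: 2; 0; 3; 1]; [:: 3; 2; 1; 0]]%nat,
         [:: (-2, 1, 2); (-6, -9, 8); (3, 3, 2); (3, -9, 1); (15, -100, 54); (72, 405, 2);
             (-180, -48, 125); (-120, 27, 512); (18722, -67081, 24334); (-125097, -79233, 101306);
             (74382, 176157, 10648); (-59829, 25047, 117649)])]
  | _ => [::]
  end.

End Certificates.

Lemma certificates_ok m : m < 4 -> certified m (certificates m.+1).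
Proof. by case: m => [|[|[|[|m]]]] m_lt4; [vm_compute..|]. Qed.

Theorem mainTheorem8 (m : nat) (K : 'I_m -> 'I_m -> 'I_m) :
  1 <= m <= 4 -> latin_square K -> realizable_over_R (MK_indep K).
Proof.
case: m K => [|m] K // /andP [_ m_le4] latK.
have [w realizes_w] := certified_realizes3 (certificates_ok m_le4) latK.
by exists 3, w; apply: realizes3_indep.
Qed.
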